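(* Let $n\ge 3$ and let $G$ be a simple graph on $n$ vertices that contains no doubly chorded cycle. Then $\rho(G)\le \tfrac{1}{2}+\sqrt{2n-\tfrac{15}{4}}$, with equality if and only if $G\cong K_{1,1,n-2}$.
   Context: All graphs are finite and simple. $\rho(G)$ denotes the spectral radius of $G$, i.e. the largest eigenvalue of its adjacency matrix. For a cycle $C$ in $G$, a chord of $C$ is an edge of $G$ joining two vertices of $C$ that is not itself an edge of $C$. A doubly chorded cycle is a cycle with at least two chords; $G$ contains a doubly chorded cycle if some cycle of $G$ has at least two chords in $G$. $K_{1,1,n-2}$ is the complete tripartite graph with parts of sizes $1,1,n-2$. *)

From HB Require Import structures.
From mathcomp Require Import all_boot all_order all_algebra.
From mathcomp Require Import classical_sets reals.
Set Implicit Arguments. Unset Strict Implicit. Unset Printing Implicit Defensive.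
Import Order.TTheory GRing.Theory Num.Theory.
Local Open Scope ring_scope.

Definition simple_graph (n : nat) (e : rel 'I_n) : Prop :=
  symmetric e /\ irreflexive e.

Definition adjmx (R : realType) (n : nat) (e : rel 'I_n) : 'M[R]_n :=
  \matrix_(i, j) (e i j)%:R.

Definition spec_rad (R : realType) (n : nat) (e : rel 'I_n) : R :=
  sup [set a : R | eigenvalue (adjmx R e) a].

Definition is_cycle (n : nat) (e : rel 'I_n) (s : seq 'I_n) : bool :=
  [&& uniq s, (2 < size s)%N & cycle e s].

Definition is_chord (n : nat) (e : rel 'I_n) (s : seq 'I_n) (x y : 'I_n) : bool :=
  [&& x \in s, y \in s, e x y, y != next s x & x != next s y].

Definition has_doubly_chorded_cycle (n : nat) (e : rel 'I_n) : Prop :=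
  exists s : seq 'I_n, is_cycle e s /\
    exists x1 y1 x2 y2 : 'I_n,
      [/\ is_chord e s x1 y1, is_chord e s x2 y2 &
          (finset.setU (finset.set1 x1) (finset.set1 y1) != finset.setU (finset.set1 x2) (finset.set1 y2))].

(* K_{1,1,n-2} on 'I_n: parts {0}, {1}, {2,...,n-1}. *)
Definition K11n (n : nat) : rel 'I_n :=
  fun i j => (i != j) && ((val i < 2)%N || (val j < 2)%N).

Definition graph_iso (n : nat) (e1 e2 : rel 'I_n) : Prop :=
  exists f : 'I_n -> 'I_n, bijective f /\ forall i j, e2 (f i) (f j) = e1 i j.

From HB Require Import structures.
From mathcomp Require Import all_boot all_order all_algebra perm.
From mathcomp Require Import boolp classical_sets reals.
From mathcomp Require Import zify ring lra.
Import Order.TTheory GRing.Theory Num.Theory.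
Set Implicit Arguments. Unset Strict Implicit. Unset Printing Implicit Defensive.

(* A graph with no doubly chorded cycle is sparse: a longest path in a subgraph of minimum
   degree 3, or in a neighbourhood of minimum degree 2 extended by its centre, closes into a
   cycle with two chords.  Hence every vertex set S spans at most 2|S| - 3 edges and every
   neighbourhood N(j) induces a forest, and double counting gives
   sum_(i in N(j)) d(i) <= 2n - 4 + d(j).  Weighting these inequalities by the absolute values
   of an eigenvector for an eigenvalue a >= 1 yields a(a - 1) <= 2n - 4, that is
   a <= 1/2 + sqrt(2n - 15/4).  In the equality case some vertex of the support has degree at
   most 2 and attains its inequality, so its two neighbours dominate the graph and no other
   edge exists: the graph is K_{1,1,n-2}, whose eigenvector (b/2, b/2, 1, ..., 1) has
   eigenvalue b with b(b - 1) = 2n - 4. *)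
Section Paths.
Variables (n : nat) (h : rel 'I_n).

Definition is_path (k : nat) (w : nat -> 'I_n) :=
  (forall i, i < k -> h (w i) (w i.+1)) /\
  (forall i j, i <= k -> j <= k -> w i = w j -> i = j).

Definition longest_path k w :=
  is_path k w /\ forall k' w', is_path k' w' -> k' <= k.

Lemma is_path_lt k w : is_path k w -> k < n.
Proof.
case=> _ w_inj; have inj_w : injective (fun i : 'I_k.+1 => w i).
  by move=> i j /w_inj eq_ij; apply/val_inj/eq_ij; rewrite -ltnS.
by have := leq_card _ inj_w; rewrite !card_ord.
Qed.

Lemma is_path_prefix k c w : c <= k -> is_path k w -> is_path c w.
Proof. by move=> ck [hw w_inj]; split=> [i ic|i j ic jc]; [apply: hw | apply: w_inj]; lia. Qed.

Lemma eq_path_vertex k w i j : is_path k w -> i <= k -> j <= k -> (w i == w j) = (i == j).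
Proof. by case=> _ w_inj ik jk; apply/eqP/eqP => [/w_inj|->]; auto. Qed.

Lemma longest_pathP x y : irreflexive h -> h x y ->
  exists k w, longest_path k w /\ 0 < k.
Proof.
move=> irr hxy.
have path1 : is_path 1 (fun i => if i is 0 then x else y).
  split=> [[|//] _ //|[|[|i]] [|[|j]] //= _ _ xy]; by move: hxy; rewrite xy irr.
pose P k := `[< exists w, is_path k w >].
have exP : exists k, P k by exists 1; apply/asboolP; exact: ex_intro _ _ path1.
have ubP k : P k -> k <= n by move=> /asboolP[w /is_path_lt/ltnW].
case: (ex_maxnP exP ubP) => k /asboolP[w pw] maxk.
exists k, w; split; last by apply: (maxk 1); apply/asboolP; exact: ex_intro _ _ path1.
by split=> // k' w' pw'; apply/maxk/asboolP; exists w'.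
Qed.

Hypothesis hsym : symmetric h.

Lemma longest_path_start_nbr k w y : longest_path k w -> h (w 0) y ->
  exists2 i, i <= k & y = w i.
Proof.
move=> [[hw w_inj] maxk] hy; apply: contrapT => y_off.
have : is_path k.+1 (fun i => if i is i'.+1 then w i' else y).
  split=> [[|i] /= ik|[|i] [|j] //= ik jk]; first by rewrite hsym.
  - exact: hw.
  - by move=> yw; case: y_off; exists j => //; lia.
  - by move=> wy; case: y_off; exists i => //; lia.
  - by move=> /w_inj ->; lia.
by move/maxk; rewrite ltnn.
Qed.

(* Posa rotation at [a]: [w (a-1), ..., w 0, w a, ..., w k]. *)
Definition rot_idx (a i : nat) := if i < a then a.-1 - i else i.

Lemma rot_idx_le a k i : a <= k -> i <= k -> rot_idx a i <= k.
Proof. rewrite /rot_idx; case: ifP; lia. Qed.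

Lemma longest_path_rot k w a : longest_path k w -> 0 < a <= k -> h (w 0) (w a) ->
  longest_path k (fun i => w (rot_idx a i)).
Proof.
move=> [[hw w_inj] maxk] a_bd ha; split=> //; rewrite /rot_idx; split.
  move=> i ik; case: (ltnP i.+1 a) => [ia|ai].
    have -> : i < a by lia.
    have -> : a.-1 - i = (a.-1 - i.+1).+1 by lia.
    rewrite hsym; apply: hw; lia.
  case: (ltnP i a) => [ia|ai'] //; last exact: hw.
  have -> : a.-1 - i = 0 by lia.
  by have -> : i.+1 = a by lia.
move=> i j ik jk; case: (ltnP i a); case: (ltnP j a) => ja ia /w_inj; lia.
Qed.

End Paths.

Lemma is_path_sub n (h e : rel 'I_n) k w : subrel h e -> is_path h k w -> is_path e k w.
Proof. by move=> he [hw w_inj]; split=> // i /hw /he. Qed.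

(* [(i, j)] indexes a chord of the cycle [w 0, ..., w c]: neither consecutive nor [(0, c)]. *)
Definition chord_idx (c i j : nat) := [&& i.+1 < j, j <= c & (0 < i) || (j < c)].

Section ClosedPath.
Variables (n : nat) (e : rel 'I_n) (c : nat) (w : nat -> 'I_n).
Hypotheses (pw : is_path e c w) (c_ge2 : 2 <= c) (ew : e (w c) (w 0)).

Let s := mkseq w c.+1.

Let weq i j : i <= c -> j <= c -> (w i == w j) = (i == j).
Proof. exact: eq_path_vertex pw. Qed.

Let nth_s i : i <= c -> nth (w 0) s i = w i.
Proof. by move=> ic; rewrite nth_mkseq. Qed.

Let mem_s i : i <= c -> w i \in s.
Proof. by move=> ic; rewrite -nth_s // mem_nth // size_mkseq. Qed.

Let uniq_s : uniq s.
Proof.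
rewrite map_inj_in_uniq ?iota_uniq // => i j; rewrite !mem_iota => ic jc.
by case: pw => _; apply; lia.
Qed.

Let next_s i : i <= c -> next s (w i) = w (if i < c then i.+1 else 0).
Proof.
move=> ic; rewrite next_nth mem_s // -{2}(nth_s ic) index_uniq ?size_mkseq //.
rewrite /s /mkseq /=; case: ifP => [lt_ic|ge_ic].
  by rewrite (nth_map 0) ?size_iota // nth_iota // add1n.
by rewrite nth_default // size_map size_iota; lia.
Qed.

Let closed_path_cycle : is_cycle e s.
Proof.
rewrite /is_cycle uniq_s size_mkseq ltnS c_ge2 (cycle_path (w 0)).
have -> : last (w 0) s = w c by rewrite (last_nth (w 0)) size_mkseq /= nth_s.
apply/(pathP (w 0)) => i; rewrite size_mkseq => ic.
case: i ic => [|i] ic; first by rewrite [nth _ (_ :: _) 0]/= nth_s.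
rewrite [nth _ (_ :: _) _]/= !nth_s; try lia; case: pw => ep _; apply: ep; lia.
Qed.

Let closed_path_chord i j : chord_idx c i j -> e (w i) (w j) -> is_chord e s (w i) (w j).
Proof.
move=> /and3P[ij jc ij_nonedge] eij; have ic : i < c by lia.
rewrite /is_chord !next_s ?ic ?mem_s ?eij //=; try lia.
rewrite weq; try lia; case: ifP => jc'; rewrite weq; lia.
Qed.

Lemma closed_path_dcc i1 j1 i2 j2 :
  chord_idx c i1 j1 -> e (w i1) (w j1) -> chord_idx c i2 j2 -> e (w i2) (w j2) ->
  (i1, j1) != (i2, j2) -> has_doubly_chorded_cycle e.
Proof.
move=> ch1 e1 ch2 e2 ne12; exists s; split=> //.
exists (w i1), (w j1), (w i2), (w j2); split; try exact: closed_path_chord.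
apply/negP => /eqP eq12.
move: ch1 ch2 => /and3P[? ? _] /and3P[? ? _].
have mem x : (x \in [set w i1; w j1]) = (x \in [set w i2; w j2]) by rewrite eq12.
move: ne12 (mem (w i1)) (mem (w j1)) (mem (w i2)) (mem (w j2)).
by rewrite xpair_eqE !inE !weq; lia.
Qed.

End ClosedPath.

Arguments closed_path_dcc [n e c w] pw c_ge2 ew i1 j1 i2 j2.

Section Degrees.
Variables (n : nat) (h : rel 'I_n).

Definition nbrs x := [set y | h x y].
Definition deg x := \sum_y (h x y : nat).
Definition deg_in (S : {set 'I_n}) x := \sum_(y in S) (h x y : nat).
Definition induced (S : {set 'I_n}) : rel 'I_n :=
  fun x y => [&& h x y, x \in S & y \in S].

Lemma deg_card x : deg x = #|nbrs x|.
Proof. by rewrite /deg -sum1dep_card [RHS]big_mkcond; apply: eq_bigr => y _; case: (h x y). Qed.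

Lemma deg_in_card S x : deg_in S x = #|[set y in S | h x y]|.
Proof. by rewrite /deg_in -sum1dep_card big_mkcondr; apply: eq_bigr => y _; case: (h x y). Qed.

Lemma deg_nbr_notin x (s : seq 'I_n) : size s < deg x -> exists2 z, h x z & z \notin s.
Proof.
rewrite deg_card => lt_s; apply: contrapT => nbrs_s.
have : nbrs x \subset s.
  apply/fintype.subsetP => z; rewrite inE => hz.
  by apply: contrapT => zs; apply: nbrs_s; exists z => //; exact/negP.
by move/subset_leq_card/leq_trans/(_ (card_size s)); rewrite leqNgt lt_s.
Qed.

End Degrees.

Lemma deg_induced n (h : rel 'I_n) (S : {set 'I_n}) x :
  x \in S -> deg (induced h S) x = deg_in h S x.
Proof.
move=> xS; rewrite /deg /deg_in [RHS]big_mkcond; apply: eq_bigr => y _.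
by rewrite /induced xS; case: (y \in S); rewrite ?andbT ?andbF.
Qed.

Section MinDegree.
Variables (n : nat) (e h : rel 'I_n).
Hypotheses (hsym : symmetric h) (hirr : irreflexive h) (he : subrel h e).

Let ehe x y : h x y -> e y x.
Proof. by rewrite hsym; apply: he. Qed.

Lemma longest_path_far_nbrs k w : longest_path h k w -> 0 < k -> 2 < deg h (w 0) ->
  exists a b, [/\ 2 <= a < b, b <= k, h (w 0) (w a) & h (w 0) (w b)].
Proof.
move=> lw k0 deg3; have weq := eq_path_vertex lw.1.
have [z1 hz1 z1_off] := deg_nbr_notin (s := [:: w 1]) (ltnW deg3).
have [i ik z1i] := longest_path_start_nbr hsym lw hz1; subst z1.
have [z2 hz2 z2_off] := deg_nbr_notin (s := [:: w 1; w i]) deg3.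
have [j jk z2j] := longest_path_start_nbr hsym lw hz2; subst z2.
have i0 : i != 0 by apply: contraTneq hz1 => ->; rewrite hirr.
have j0 : j != 0 by apply: contraTneq hz2 => ->; rewrite hirr.
move: z1_off z2_off; rewrite !inE !weq //; try lia.
case: (ltnP i j) => ij ? ?; [exists i, j | exists j, i]; split=> //; lia.
Qed.

(* Take a longest path [w] and neighbours [w a], [w b] of [w 0] with [2 <= a < b].  After the
   Posa rotation at [a] the path starts at [w (a-1)], whose third neighbour [w d] lies on the
   path; wherever [d] falls relative to [a] and [b], a cycle with two chords appears. *)
Lemma mindeg3_dcc x0 y0 : h x0 y0 -> (forall x y, h x y -> 2 < deg h x) ->
  has_doubly_chorded_cycle e.
Proof.
move=> hxy0 deg3.
have [k [w [lw k0]]] := longest_pathP hirr hxy0.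
have weq := eq_path_vertex lw.1.
have [a [b [/andP[a2 ab] bk ha hb]]] := longest_path_far_nbrs lw k0 (deg3 _ _ (lw.1.1 0 k0)).
pose q i := w (rot_idx a i).
have lq : longest_path h k q by apply: longest_path_rot => //; lia.
have q_lo i : i < a -> q i = w (a.-1 - i) by rewrite /q /rot_idx => ->.
have q_hi i : a <= i -> q i = w i by rewrite /q /rot_idx ltnNge => ->.
have hq01 : h (q 0) (q 1) by apply: lq.1.1; lia.
have [z hz z_off] := deg_nbr_notin (s := [:: w (a - 2); w a]) (deg3 _ _ hq01).
have [d' d'k zd'] := longest_path_start_nbr hsym lq hz.
have [d dk zd] : exists2 d, d <= k & z = w d.
  by exists (rot_idx a d'); [apply: rot_idx_le; lia | rewrite zd'].
rewrite q_lo in hz; try lia; rewrite subn0 zd in hz.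
have da1 : d != a.-1 by apply: contraTneq hz => ->; rewrite hirr.
move: z_off; rewrite zd !inE !weq; try lia; move=> d_off.
have [bd | db] := ltnP b d.
  apply: (closed_path_dcc (is_path_sub he (is_path_prefix dk lq.1)) _ _ a.-1 b 0 a).
  - lia.
  - by rewrite q_hi ?q_lo ?subn0; [exact: ehe | lia | lia].
  - rewrite /chord_idx; lia.
  - by rewrite q_lo ?q_hi ?subnn; [exact: he | lia | lia].
  - rewrite /chord_idx; lia.
  - rewrite q_lo ?q_hi ?subn0; try lia.
    by apply: he; rewrite -{2}(prednK (ltnW a2)); apply: lw.1.1; lia.
  - by rewrite xpair_eqE; lia.
have path_b := is_path_sub he (is_path_prefix bk lw.1).
have [ad | da] := ltnP a d.
  apply: (closed_path_dcc path_b _ (ehe hb) 0 a a.-1 d); try lia.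
  - rewrite /chord_idx; lia.
  - exact: he.
  - rewrite /chord_idx; lia.
  - exact: he.
  - by rewrite xpair_eqE; lia.
apply: (closed_path_dcc path_b _ (ehe hb) 0 a d a.-1); try lia.
- rewrite /chord_idx; lia.
- exact: he.
- rewrite /chord_idx; lia.
- exact: ehe.
- by rewrite xpair_eqE; lia.
Qed.

End MinDegree.

Section Cone.
Variables (n : nat) (e h : rel 'I_n) (j : 'I_n).
Hypotheses (esym : symmetric e) (eirr : irreflexive e).
Hypotheses (hsym : symmetric h) (hirr : irreflexive h) (he : subrel h e).
Hypothesis hj : forall x y, h x y -> e j x.

(* Prepending [j] to a longest path of [h] gives a closed path with chords [j w1] and [w0 wb]. *)
Lemma cone_mindeg2_dcc x0 y0 : h x0 y0 -> (forall x y, h x y -> 1 < deg h x) ->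
  has_doubly_chorded_cycle e.
Proof.
move=> hxy0 deg2.
have [k [w [lw k0]]] := longest_pathP hirr hxy0.
have [[hw w_inj] _] := lw; have weq := eq_path_vertex lw.1.
have [z hz z_off] := deg_nbr_notin (s := [:: w 1]) (deg2 _ _ (hw 0 k0)).
have [b bk zb] := longest_path_start_nbr hsym lw hz; subst z.
have b0 : b != 0 by apply: contraTneq hz => ->; rewrite hirr.
move: z_off; rewrite inE weq // => b1.
have ej i : i <= k -> e j (w i).
  move=> ik; case: (ltnP i k) => [/hw/hj //|ki].
  have -> : i = k.-1.+1 by lia.
  by apply: (hj (y := w k.-1)); rewrite hsym; apply: hw; lia.
pose w' i := if i is i'.+1 then w i' else j.
have pw' : is_path e k.+1 w'.
  split=> [[|i] ik /=|[|i] [|i'] //= ik ik']; first exact: ej.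
  - by apply/he/hw.
  - by move=> jw; move: (ej i' ik'); rewrite -jw eirr.
  - by move=> wj; move: (ej i ik); rewrite wj eirr.
  - by move/w_inj ->.
apply: (closed_path_dcc (is_path_prefix (_ : b.+1 <= k.+1) pw') _ _ 0 2 1 b.+1) => //=.
- lia.
- by rewrite esym; apply: ej.
- rewrite /chord_idx; lia.
- by apply: ej; lia.
- rewrite /chord_idx; lia.
- exact: he.
Qed.

End Cone.

Section InducedSubgraphs.
Variables (n : nat) (h : rel 'I_n) (S : {set 'I_n}).

Lemma induced_sym : symmetric h -> symmetric (induced h S).
Proof. by move=> hsym x y; rewrite /induced hsym; case: (x \in S); rewrite ?andbF ?andbT. Qed.

Lemma induced_irr : irreflexive h -> irreflexive (induced h S).
Proof. by move=> hirr x; rewrite /induced hirr. Qed.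

Lemma induced_sub : subrel (induced h S) h.
Proof. by move=> x y /andP[]. Qed.

Lemma induced_nbr x k : x \in S -> k < deg_in h S x -> exists y, induced h S x y.
Proof.
move=> xS; rewrite -deg_induced // => /(leq_ltn_trans (leq0n k)).
by case/(deg_nbr_notin (s := [::])) => y; exists y.
Qed.

End InducedSubgraphs.

Lemma induced_mindeg3_dcc n (e h : rel 'I_n) (S : {set 'I_n}) :
  symmetric h -> irreflexive h -> subrel h e ->
  0 < #|S| -> {in S, forall x, 2 < deg_in h S x} -> has_doubly_chorded_cycle e.
Proof.
move=> hsym hirr he /card_gt0P[x xS] deg3.
have [y hxy] := induced_nbr xS (deg3 x xS).
apply: (mindeg3_dcc (induced_sym S hsym) (induced_irr S hirr) _ hxy).
- by move=> ? ? /induced_sub /he.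
- by move=> u v /and3P[_ uS _]; rewrite deg_induced // deg3.
Qed.

Lemma induced_cone_dcc n (e : rel 'I_n) j (S : {set 'I_n}) : symmetric e -> irreflexive e ->
  S \subset nbrs e j -> 0 < #|S| -> {in S, forall x, 1 < deg_in e S x} ->
  has_doubly_chorded_cycle e.
Proof.
move=> esym eirr Sj /card_gt0P[x xS] deg2.
have [y hxy] := induced_nbr xS (deg2 x xS).
apply: (cone_mindeg2_dcc (j := j) esym eirr (induced_sym S esym) (induced_irr S eirr)
  (@induced_sub _ e S) _ hxy).
- by move=> u v /and3P[_ uS _]; move/fintype.subsetP: Sj => /(_ u uS); rewrite /nbrs inE.
- by move=> u v /and3P[_ uS _]; rewrite deg_induced // deg2.
Qed.

Section DegreeSums.
Variables (n : nat) (h : rel 'I_n).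
Hypotheses (hsym : symmetric h) (hirr : irreflexive h).
Implicit Types S : {set 'I_n}.

Definition deg_sum S := \sum_(x in S) deg_in h S x.

Lemma deg_sum_le S : deg_sum S <= #|S| * #|S|.-1.
Proof.
rewrite /deg_sum -sum_nat_const; apply: leq_sum => x xS.
rewrite deg_in_card (cardsD1 x S) xS add1n /=; apply: subset_leq_card.
apply/fintype.subsetP => y; rewrite !inE => /andP[yS hxy].
by rewrite yS andbT; apply: contraTneq hxy => ->; rewrite hirr.
Qed.

Lemma deg_sum_del S x : x \in S -> deg_sum S = deg_sum (S :\ x) + 2 * deg_in h S x.
Proof.
move=> xS; have SxE y : (y \in S :\ x) = (y \in S) && (y != x) by rewrite !inE andbC.
have deg_del y : deg_in h S y = deg_in h (S :\ x) y + h y x.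
  by rewrite /deg_in (bigD1 x xS) addnC; congr (_ + _); apply: eq_bigl => z; rewrite SxE.
have deg_x : \sum_(y | (y \in S) && (y != x)) h x y = deg_in h S x.
  by rewrite deg_del hirr addn0; apply: eq_bigl => y; rewrite SxE.
rewrite /deg_sum (bigD1 x xS) /=; under eq_bigr => y _ do rewrite deg_del hsym.
rewrite big_split /= deg_x addnCA addnn -mul2n; congr (_ + _).
by apply: eq_bigl => y; rewrite SxE.
Qed.

(* [deg_sum] counts every edge twice; peel off vertices of degree at most [d] until [m] remain. *)
Lemma deg_sum_peel d m b S0 : b + m * m.-1 <= 2 * d * m ->
  (forall S, S \subset S0 -> m < #|S| -> exists2 x, x \in S & deg_in h S x <= d) ->
  forall S, S \subset S0 -> m <= #|S| -> deg_sum S + b <= 2 * d * #|S|.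
Proof.
move=> base peel S; move Sk: #|S| => k; elim: k S Sk => [|k IH] S Sk SS0 mk.
  by move: mk base; rewrite leqn0 => /eqP->; have := deg_sum_le S; rewrite Sk; lia.
have [km | ne_mk] := eqVneq m k.+1.
  by move: base; rewrite km; have := deg_sum_le S; rewrite Sk; lia.
have lt_mS : m < #|S| by rewrite Sk ltn_neqAle ne_mk.
have [x xS dx] := peel S SS0 lt_mS.
have Sxk : #|S :\ x| = k by have := cardsD1 x S; rewrite xS Sk; lia.
have := IH _ Sxk (fintype.subset_trans (subD1set S x) SS0).
rewrite (deg_sum_del xS) mulnS; lia.
Qed.

End DegreeSums.

Section DccFree.
Variables (n : nat) (e : rel 'I_n).
Hypotheses (esym : symmetric e) (eirr : irreflexive e).
Hypothesis no_dcc : ~ has_doubly_chorded_cycle e.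

Lemma dcc_free_deg_sum_le (h : rel 'I_n) (S : {set 'I_n}) :
  symmetric h -> irreflexive h -> subrel h e -> 1 < #|S| -> deg_sum h S + 6 <= 4 * #|S|.
Proof.
move=> hsym hirr he S2.
suff : deg_sum h S + 6 <= 2 * 2 * #|S| by [].
apply: (deg_sum_peel hsym hirr (m := 2) _ _ (subxx S)) => // S' _ S'3.
apply: contrapT => low; apply: no_dcc.
apply: (induced_mindeg3_dcc hsym hirr he (_ : 0 < #|S'|)) => [|x xS]; first lia.
by rewrite ltnNge; apply/negP => dx; apply: low; exists x.
Qed.

Lemma dcc_free_nbrs_deg_sum_le j (T : {set 'I_n}) :
  T \subset nbrs e j -> 0 < #|T| -> deg_sum e T + 2 <= 2 * #|T|.
Proof.
move=> Tj T1; suff : deg_sum e T + 2 <= 2 * 1 * #|T| by rewrite muln1.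
apply: (deg_sum_peel esym eirr (m := 1) _ _ (subxx T)) => // S' S'T S'2.
apply: contrapT => low; apply: no_dcc.
apply: (induced_cone_dcc esym eirr (fintype.subset_trans S'T Tj) (_ : 0 < #|S'|)) => [|x xS].
  lia.
by rewrite ltnNge; apply/negP => dx; apply: low; exists x.
Qed.

(* Count twice the edges at the neighbourhood [N] of [j]: those meeting [N] span at most
   [2n - 3] edges, and those inside [N] form a forest. *)
Lemma nbrs_deg_sum_le j : 1 < n -> \sum_(i in nbrs e j) deg e i + 4 <= 2 * n + deg e j.
Proof.
move=> n2; set N := nbrs e j.
pose h x y := e x y && ((x \in N) || (y \in N)).
have sum_in (F : 'I_n -> nat) : \sum_(i in N) F i = \sum_i (i \in N) * F i.
  by rewrite big_mkcond; apply: eq_bigr => i _; case: (i \in N); rewrite ?mul1n.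
have double_count : 2 * \sum_(i in N) deg e i = deg_sum h [set: 'I_n] + deg_sum e N.
  have -> : deg_sum h [set: 'I_n] = \sum_i \sum_y h i y.
    apply: eq_big => [i|i _]; rewrite ?finset.in_setT //.
    by apply: eq_bigl => y; rewrite finset.in_setT.
  have -> : deg_sum e N = \sum_i \sum_y (i \in N) * ((y \in N) * e i y).
    by rewrite /deg_sum sum_in; apply: eq_bigr => i _; rewrite /deg_in sum_in big_distrr.
  have sum_swap : \sum_(i in N) deg e i = \sum_i \sum_y (y \in N) * e i y.
    rewrite sum_in /deg; under eq_bigr do rewrite big_distrr.
    by rewrite exchange_big; apply: eq_bigr => i _; apply: eq_bigr => y _; rewrite esym.
  rewrite mul2n -addnn {2}sum_swap sum_in /deg -!big_split; apply: eq_bigr => i _.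
  rewrite big_distrr -!big_split; apply: eq_bigr => y _ /=.
  by rewrite /h; case: (i \in N); case: (y \in N); case: (e i y).
have hsym : symmetric h by move=> x y; rewrite /h esym orbC.
have hirr : irreflexive h by move=> x; rewrite /h eirr.
have he : subrel h e by move=> x y /andP[].
have T2 : 1 < #|[set: 'I_n]| by rewrite cardsT card_ord.
have := dcc_free_deg_sum_le hsym hirr he T2; rewrite cardsT card_ord deg_card -/N.
have [N0 | N_gt0] := posnP #|N|.
  have -> : N = finset.set0 by apply/eqP; rewrite -cards_eq0 N0.
  by rewrite big_set0; lia.
move: double_count (dcc_free_nbrs_deg_sum_le (subxx N) N_gt0).
by set K := #|N|; lia.
Qed.

End DccFree.

Definition nbr_closed n (e : rel 'I_n) (T : {set 'I_n}) :=
  forall x y, x \in T -> e x y -> y \in T.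

(* For [#|H| = 2] this is [K_{1,1,n-2}], with [H] the two singleton parts. *)
Definition hub_graph n (H : {set 'I_n}) : rel 'I_n :=
  fun x y => (x != y) && ((x \in H) || (y \in H)).

Section ExtremalGraphs.
Variables (n : nat) (e : rel 'I_n).
Hypotheses (esym : symmetric e) (eirr : irreflexive e).
Hypothesis no_dcc : ~ has_doubly_chorded_cycle e.

Lemma deg_le_pred x : deg e x <= n.-1.
Proof.
have := cardsC1 x; rewrite card_ord deg_card => <-; apply: subset_leq_card.
by apply/fintype.subsetP => y; rewrite !inE; apply: contraTneq => ->; rewrite eirr.
Qed.

Lemma deg_eq_pred_nbr x y : deg e x = n.-1 -> y != x -> e x y.
Proof.
move=> dx yx; apply/negPn/negP => nexy.
have : nbrs e x \subset [set~ x] :\ y.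
  apply/fintype.subsetP => z; rewrite !inE => exz; apply/andP; split.
  - by apply: contraNneq nexy => <-.
  - by apply: contraTneq exz => ->; rewrite eirr.
move/subset_leq_card; rewrite -deg_card dx.
by have := cardsD1 y [set~ x]; rewrite !inE yx cardsC1 card_ord; lia.
Qed.

Lemma sum_deg_le (A : {set 'I_n}) : \sum_(i in A) deg e i <= #|A| * n.-1.
Proof. by rewrite -sum_nat_const; apply: leq_sum => i _; apply: deg_le_pred. Qed.

Lemma deg_in_closed (T : {set 'I_n}) x : nbr_closed e T -> x \in T -> deg_in e T x = deg e x.
Proof.
move=> T_cl xT; rewrite /deg_in /deg big_mkcond; apply: eq_bigr => y _.
case: (boolP (y \in T)) => // yT.
by case: (boolP (e x y)) => // /(T_cl _ _ xT); rewrite (negPf yT).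
Qed.

Lemma dominating_pair_hub u w : u != w -> (forall y, y != u -> e u y) ->
  (forall y, y != w -> e w y) -> e =2 hub_graph [set u; w].
Proof.
move=> uw eu ew x y; rewrite /hub_graph !inE.
have [<-|xy] := eqVneq x y; first by rewrite eirr.
have [xu|xu] := eqVneq x u; first by subst x; rewrite eu // eq_sym.
have [xw|xw] := eqVneq x w; first by subst x; rewrite ew // eq_sym.
have [yu|yu] := eqVneq y u; first by subst y; rewrite esym eu.
have [yw|yw] := eqVneq y w; first by subst y; rewrite esym ew.
apply/negbTE/negP => exy; apply: no_dcc.
(* [u x y w] closes through [w u], with chords [u y] and [x w]. *)
pose p i := nth u [:: u; x; y; w] i.
have uniq_p : uniq [:: u; x; y; w].
  by rewrite /= !inE !negb_or (eq_sym u x) (eq_sym u y) uw xu xw xy yu yw.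
have path_p : is_path e 3 p.
  split=> [[|[|[|i]]] //= _|i j i3 j3 /eqP]; first exact: eu.
  - by rewrite esym ew.
  - by rewrite /p nth_uniq //; move/eqP.
apply: (closed_path_dcc path_p _ _ 0 2 1 3) => //=; first by rewrite ew // eq_sym.
  exact: eu.
by rewrite esym ew.
Qed.

(* A vertex of degree at most 2 exists in [T], and equality forces its two neighbours to be
   adjacent to everything. *)
Lemma nbr_deg_sum_eq_hub (T : {set 'I_n}) : 2 < n -> 0 < #|T| -> nbr_closed e T ->
  {in T, forall k, \sum_(i in nbrs e k) deg e i + 4 = 2 * n + deg e k} ->
  exists2 H : {set 'I_n}, #|H| = 2 & e =2 hub_graph H.
Proof.
move=> n3 T0 T_cl T_eq.
have [v vT dv] : exists2 v, v \in T & deg e v <= 2.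
  apply: contrapT => deg3; apply: no_dcc.
  apply: (induced_mindeg3_dcc esym eirr (fun x y exy => exy) T0) => x xT.
  by rewrite deg_in_closed // ltnNge; apply/negP => dx; apply: deg3; exists x.
have dv2 : deg e v = 2.
  move: (sum_deg_le (nbrs e v)) (T_eq v vT) dv; rewrite -deg_card.
  by set s := \sum_(i in _) _; case: (deg e v) => [|[|[|?]]] //=; lia.
have /cards2P[u [w [uw Nv]]] : #|nbrs e v| == 2 by rewrite -deg_card dv2.
move: (T_eq v vT) (deg_le_pred u) (deg_le_pred w).
rewrite Nv big_setU1 ?inE // big_set1 dv2 /= => deg_uw du dw.
exists [set u; w]; first by rewrite cards2 uw.
by apply: dominating_pair_hub => // y yx; apply: deg_eq_pred_nbr yx; lia.
Qed.

End ExtremalGraphs.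

Lemma K11nE n : @K11n n =2 hub_graph [set i : 'I_n | i < 2].
Proof. by move=> i j; rewrite /hub_graph !inE. Qed.

Lemma card_lt2 n : 1 < n -> #|[set i : 'I_n | i < 2]| = 2.
Proof.
move=> n1; have -> : [set i : 'I_n | i < 2] = [set Ordinal (ltnW n1); Ordinal n1].
  by apply/setP => -[[|[|i]] ?]; rewrite !inE.
by rewrite cards2.
Qed.

Lemma hub_graph_iso n (H : {set 'I_n}) : #|H| = 2 -> graph_iso (hub_graph H) (@K11n n).
Proof.
move=> /eqP/cards2P[u [w [uw ->]]].
have n1 : 1 < n by have := max_card [set u; w]; rewrite cards2 uw card_ord.
pose o0 := Ordinal (ltnW n1); pose o1 := Ordinal n1.
pose s : {perm 'I_n} := (tperm u o0 * tperm o1 (tperm u o0 w))%g.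
have su : s u = o0.
  rewrite permM tpermL; apply: tpermD => //.
  by rewrite -{2}(tpermL u o0) (inj_eq (@perm_inj _ _)) eq_sym.
have sw : s w = o1 by rewrite permM tpermR.
have s_lt2 x : (s x < 2) = (x \in [set u; w]).
  rewrite !inE -(inj_eq (@perm_inj _ s) x u) -(inj_eq (@perm_inj _ s) x w) su sw.
  by case: (s x) => -[|[|i]] ?.
exists s; split; first by exists s^-1%g => x; rewrite ?permK ?permKV.
by move=> i j; rewrite K11nE /hub_graph !inE (inj_eq (@perm_inj _ s)) !s_lt2 !inE.
Qed.

Lemma iso_K11n_hub n (e : rel 'I_n) : 1 < n -> graph_iso e (@K11n n) ->
  exists2 H : {set 'I_n}, #|H| = 2 & e =2 hub_graph H.
Proof.
move=> n1 [f [f_bij f_iso]]; have f_inj := bij_inj f_bij.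
exists (f @^-1: [set i : 'I_n | i < 2]); first by rewrite card_preimset // card_lt2.
by move=> i j; rewrite -f_iso K11nE /hub_graph (inj_eq f_inj) !inE.
Qed.

Local Open Scope ring_scope.

Section EigenvalueBound.
Variables (R : realType) (n : nat) (e : rel 'I_n).
Hypothesis esym : symmetric e.
Hypothesis nbr_bound : forall j, (\sum_(i in nbrs e j) deg e i + 4 <= 2 * n + deg e j)%N.
Variables (a : R) (v : 'rV[R]_n).
Hypotheses (a_ge1 : 1 <= a) (v_eigen : v *m adjmx R e = a *: v) (v_neq0 : v != 0).

Local Notation E i j := ((e i j)%:R : R).
Let y i := `|v 0 i|.
Let z j := \sum_i y i * E i j.
Let d i : R := (deg e i)%:R.
Let S k := \sum_i E k i * d i.
Let c : R := (2 * n)%:R - 4.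
Let Y := \sum_j y j.

Let y_ge0 i : 0 <= y i. Proof. exact: normr_ge0. Qed.

Let z_ge j : a * y j <= z j.
Proof.
have := congr1 (fun M : 'rV[R]_n => M 0 j) v_eigen; rewrite !mxE => eigen_j.
rewrite /y -(ger0_norm (le_trans ler01 a_ge1)) -normrM -eigen_j.
apply: le_trans (ler_norm_sum _ _ _) _; apply: ler_sum => i _.
by rewrite /adjmx mxE normrM normr_nat.
Qed.

Let S_nat k : S k = (\sum_(i in nbrs e k) deg e i)%:R.
Proof.
rewrite natr_sum big_mkcond /=; apply: eq_bigr => i _.
by rewrite inE /d; case: (e k i); rewrite ?mul1r ?mul0r.
Qed.

Let S_le k : S k - d k <= c.
Proof.
have := nbr_bound k; rewrite -(ler_nat R) !natrD S_nat /c /d.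
by rewrite -[4%:R]/(4 : R); lra.
Qed.

Let y_nz : exists i, y i != 0.
Proof.
apply: contrapT => y0; apply/(negP v_neq0)/eqP/rowP => i; rewrite mxE.
by apply/eqP; rewrite -normr_eq0; apply: contrapT => yi; apply: y0; exists i; apply/negP.
Qed.

Let Y_gt0 : 0 < Y.
Proof.
have [i yi] := y_nz; rewrite /Y (bigD1 i) //= ltr_pwDl ?sumr_ge0 //.
by rewrite lt_def yi y_ge0.
Qed.

Let sum_z_ge : a * Y <= \sum_j z j.
Proof. by rewrite /Y mulr_sumr; apply: ler_sum. Qed.

Let lower : a * (a - 1) * Y <= (a - 1) * \sum_j z j.
Proof. by rewrite mulrAC mulrC ler_wpM2l ?subr_ge0. Qed.

(* [sum_k y_k S_k = sum_i d_i z_i >= a sum_j z_j] and [sum_k y_k d_k = sum_j z_j]. *)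
Let middle : (a - 1) * \sum_j z j <= \sum_k y k * (S k - d k).
Proof.
have dE i : d i = \sum_j E i j by rewrite /d /deg natr_sum.
have yS : \sum_k y k * S k = \sum_i d i * z i.
  rewrite /S /z; under eq_bigr do rewrite big_distrr /=.
  rewrite exchange_big /=; apply: eq_bigr => i _; rewrite big_distrr /=.
  by apply: eq_bigr => k _; rewrite mulrA mulrC.
have dz : \sum_i d i * z i = \sum_j \sum_i E i j * z i.
  under eq_bigr do rewrite dE mulr_suml.
  by rewrite exchange_big /=; apply: eq_bigr => j _; apply: eq_bigr => i _; rewrite esym.
have yd : \sum_k y k * d k = \sum_j z j.
  by rewrite /z exchange_big /=; apply: eq_bigr => k _; rewrite dE big_distrr.
have az : a * \sum_j z j <= \sum_j \sum_i E i j * z i.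
  rewrite mulr_sumr; apply: ler_sum => j _; rewrite /z mulr_sumr; apply: ler_sum => i _.
  by rewrite mulrA mulrC ler_wpM2l.
under [X in _ <= X]eq_bigr do rewrite mulrBr.
by rewrite sumrB yS dz yd mulrBl mul1r lerD2r.
Qed.

Let upper : \sum_k y k * (S k - d k) <= c * Y.
Proof. by rewrite /Y mulr_sumr; apply: ler_sum => k _; rewrite mulrC ler_wpM2r. Qed.

Lemma eigen_quad_le : a * (a - 1) <= (2 * n)%:R - 4.
Proof. by rewrite -(ler_pM2r Y_gt0); apply: le_trans lower (le_trans middle upper). Qed.

Lemma eigen_quad_eq : (3 <= n)%N -> a * (a - 1) = (2 * n)%:R - 4 ->
  exists2 T : {set 'I_n}, (0 < #|T|)%N &
    nbr_closed e T /\ {in T, forall k, (\sum_(i in nbrs e k) deg e i + 4 = 2 * n + deg e k)%N}.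
Proof.
move=> n3 eq_c; have c_gt0 : 0 < c.
  by rewrite /c subr_gt0 ltr_nat; lia.
have a_gt1 : 1 < a.
  rewrite lt_neqAle a_ge1 andbT; apply: contraTneq c_gt0 => a1.
  by rewrite /c -eq_c -a1 subrr mulr0 ltxx.
have sum_yS : \sum_k y k * (S k - d k) = c * Y.
  apply: le_anti; rewrite upper /= /c -eq_c; exact: le_trans lower middle.
have sum_z : \sum_j z j = a * Y.
  apply: le_anti; rewrite sum_z_ge andbT.
  rewrite -(ler_pM2l (_ : 0 < a - 1)) ?subr_gt0 //; apply: le_trans middle _.
  by rewrite sum_yS /c -eq_c mulrAC mulrC.
have z_eq j : z j = a * y j.
  have zay_ge0 i : true -> 0 <= z i - a * y i by rewrite subr_ge0.
  have /(psumr_eq0P zay_ge0) zay0 : \sum_i (z i - a * y i) = 0.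
    by rewrite sumrB sum_z /Y mulr_sumr subrr.
  by apply/eqP; rewrite -subr_eq0 zay0.
have S_eq k : y k != 0 -> S k - d k = c.
  have ySc_ge0 i : true -> 0 <= y i * (c - (S i - d i)) by rewrite mulr_ge0 ?subr_ge0.
  have /(psumr_eq0P ySc_ge0) ySc0 : \sum_i y i * (c - (S i - d i)) = 0.
    by under eq_bigr do rewrite mulrBr; rewrite sumrB sum_yS -mulr_suml mulrC subrr.
  by move=> yk; have /eqP := ySc0 k isT; rewrite mulf_eq0 (negbTE yk) subr_eq0 => /eqP.
exists [set k | y k != 0].
  by have [i yi] := y_nz; apply/card_gt0P; exists i; rewrite inE.
split.
  move=> x x0; rewrite !inE => yx ex0.
  have : y x <= z x0.
    rewrite /z (bigD1 x) //= ex0 mulr1 lerDl; apply: sumr_ge0 => i _; exact: mulr_ge0.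
  by rewrite z_eq; apply: contraTneq => ->; rewrite mulr0 -ltNge lt_def yx y_ge0.
move=> k; rewrite inE => /S_eq; rewrite S_nat /c /d => eq_k.
by apply/eqP; rewrite -(eqr_nat R) !natrD -[4%:R]/(4 : R); apply/eqP; lra.
Qed.

End EigenvalueBound.

Lemma hub_graph_eigenvalue (R : realType) n (H : {set 'I_n}) (b : R) : #|H| = 2%N -> 0 < b ->
  b * (b - 1) = (2 * n)%:R - 4 -> eigenvalue (adjmx R (hub_graph H)) b.
Proof.
move=> H2 b_gt0 b_quad.
pose v := \row_i (if i \in H then b / 2 else 1) : 'rV[R]_n.
have sum_H (F : 'I_n -> R) c : {in H, forall i, F i = c} -> \sum_(i in H) F i = c *+ 2.
  by move=> FH; rewrite (eq_bigr (fun=> c)) // sumr_const H2.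
have sum_v : \sum_i v 0 i = n%:R + b - 2.
  transitivity (\sum_i (1 + (if i \in H then b / 2 - 1 else 0))).
    by apply: eq_bigr => i _; rewrite mxE; case: (i \in H); rewrite ?addr0 // addrC subrK.
  rewrite big_split /= sumr_const card_ord -big_mkcond (sum_H _ (b / 2 - 1)) //.
  by rewrite mulr2n; lra.
have row_sum j : (v *m adjmx R (hub_graph H)) 0 j = \sum_(i | hub_graph H i j) v 0 i.
  rewrite mxE [RHS]big_mkcond; apply: eq_bigr => i _; rewrite !mxE.
  by case: (hub_graph H i j); rewrite /= ?mulr1 ?mulr0.
apply/eigenvalueP; exists v.
  apply/rowP => j; rewrite row_sum !mxE; case: ifPn => jH.
    rewrite (eq_bigl (fun i => i != j)) => [|i]; last by rewrite /hub_graph jH orbT andbT.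
    have -> : \sum_(i | i != j) v 0 i = \sum_i v 0 i - v 0 j.
      by rewrite [in RHS](bigD1 j) //= addrAC subrr add0r.
    by rewrite sum_v mxE jH; rewrite natrM in b_quad; lra.
  rewrite (eq_bigl (mem H)) => [|i]; last first.
    by rewrite /hub_graph (negPf jH) orbF andb_idl //; apply: contraTneq => ->.
  rewrite (sum_H _ (b / 2)) => [|i iH]; last by rewrite mxE iH.
  by rewrite mulr2n; lra.
have [i iH] : exists i, i \in H by apply/card_gt0P; rewrite H2.
by apply/negP => /eqP/rowP/(_ i); rewrite !mxE iH; lra.
Qed.

Lemma sup_root_mem (R : realType) (p : {poly R}) (A : set R) :
  p != 0 -> (forall x, A x -> root p x) -> has_sup A -> A (sup A).
Proof.
move=> p0 rootA supA; apply: contrapT => supNA.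
have near_sup M : M < sup A -> exists2 x, A x & M < x < sup A.
  move=> MS; have MS' : 0 < sup A - M by rewrite subr_gt0.
  have [x Ax] := sup_adherent MS' supA; rewrite opprB addrCA subrr addr0 => Mx.
  have := sup_upper_bound supA Ax; rewrite le_eqVlt => /predU1P[xS|xS].
    by move: Ax; rewrite xS.
  by exists x => //; rewrite Mx.
have roots_below m : exists2 M, M < sup A &
    exists rs, [/\ uniq rs, all (root p) rs, size rs = m & all (fun r => r <= M) rs].
  elim: m => [|m [M MS [rs [u r s le]]]].
    by exists (sup A - 1); [rewrite ltrBlDr ltrDl | exists [::]].
  have [x Ax /andP[Mx xS]] := near_sup M MS.
  exists x => //; exists (x :: rs); split=> /=.
  - by rewrite u andbT; apply/negP => /(allP le) xM; lra.
  - by rewrite r rootA.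
  - by rewrite s.
  - by rewrite lexx; apply/allP => y /(allP le) yM; lra.
have [M _ [rs [u r s _]]] := roots_below (size p).
by have := max_poly_roots p0 r u; rewrite s ltnn.
Qed.

Lemma half_add_sqrt_quad (R : rcfType) (c : R) : - 4^-1 <= c ->
  (2^-1 + Num.sqrt (c + 4^-1)) * (2^-1 + Num.sqrt (c + 4^-1) - 1) = c.
Proof.
move=> c_ge; have : Num.sqrt (c + 4^-1) ^+ 2 = c + 4^-1 by rewrite sqr_sqrtr; lra.
by rewrite expr2; nra.
Qed.

Lemma le_half_add_sqrt (R : rcfType) (c a : R) :
  2^-1 <= a -> a * (a - 1) <= c -> a <= 2^-1 + Num.sqrt (c + 4^-1).
Proof.
move=> a_ge a_quad; have a2 : 0 <= a - 2^-1 by rewrite subr_ge0.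
rewrite -lerBlDl -(ger0_norm a2) -sqrtr_sqr ler_sqrt; nra.
Qed.

Lemma eq_adjmx (R : realType) n (e1 e2 : rel 'I_n) : e1 =2 e2 -> adjmx R e1 = adjmx R e2.
Proof. by move=> e12; apply/matrixP => i j; rewrite !mxE e12. Qed.

Lemma eq_graph_iso n (e1 e2 e3 : rel 'I_n) : e1 =2 e2 -> graph_iso e2 e3 -> graph_iso e1 e3.
Proof. by move=> e12 [f [f_bij f_iso]]; exists f; split=> // i j; rewrite f_iso e12. Qed.

Section SpectralRadius.
Variables (R : realType) (n : nat) (e : rel 'I_n) (B : R).
Hypothesis eigen_le : forall a, eigenvalue (adjmx R e) a -> a <= B.

Let eigen_set := [set a : R | eigenvalue (adjmx R e) a]%classic.

Lemma spec_rad_le : 0 <= B -> spec_rad R e <= B.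
Proof.
rewrite /spec_rad -/eigen_set => B_ge0; have [S0|S0] := pselect (eigen_set !=set0)%classic.
  exact: ge_sup.
by rewrite sup_out // => -[].
Qed.

(* The hypothesis rules out the junk value [sup set0 = 0]. *)
Lemma spec_rad_eigenvalue : spec_rad R e != 0 -> eigenvalue (adjmx R e) (spec_rad R e).
Proof.
rewrite /spec_rad -/eigen_set => rad_neq0.
have S0 : (eigen_set !=set0)%classic.
  by apply: contrapT => S0; move: rad_neq0; rewrite sup_out ?eqxx // => -[].
apply: (@sup_root_mem _ (char_poly (adjmx R e)) eigen_set).
- exact/monic_neq0/char_poly_monic.
- by move=> a; rewrite /eigen_set /= eigenvalue_root_char.
- by split=> //; exists B.
Qed.

Lemma spec_rad_max : eigenvalue (adjmx R e) B -> spec_rad R e = B.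
Proof.
move=> eigen_B; have S0 : (eigen_set !=set0)%classic by exists B.
rewrite /spec_rad -/eigen_set; apply: le_anti; rewrite ge_sup //=.
by apply: sup_upper_bound => //; split=> //; exists B.
Qed.

End SpectralRadius.

Unset Implicit Arguments.

Theorem theorem1p1 (R : realType) (n : nat) (e : rel 'I_n) :
  (3 <= n)%N -> simple_graph e -> ~ has_doubly_chorded_cycle e ->
  spec_rad R e <= 2^-1 + Num.sqrt (2 * n%:R - 15 / 4) /\
  (spec_rad R e = 2^-1 + Num.sqrt (2 * n%:R - 15 / 4) <-> graph_iso e (@K11n n)).
Proof.
move=> n3 [esym eirr] no_dcc.
have -> : 2 * n%:R - 15 / 4 = (2 * n)%:R - 4 + 4^-1 :> R by rewrite natrM; field.
have c_ge2 : 2 <= (2 * n)%:R - 4 :> R.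
  have : 3 <= n%:R :> R by rewrite ler_nat.
  by rewrite natrM; lra.
set B := 2^-1 + Num.sqrt _.
have B_quad : B * (B - 1) = (2 * n)%:R - 4 by apply: half_add_sqrt_quad; lra.
have B_ge1 : 1 <= B by apply: le_half_add_sqrt; lra.
have nbr_bound j := nbrs_deg_sum_le esym eirr no_dcc j (ltnW n3).
have eigen_le a : eigenvalue (adjmx R e) a -> a <= B.
  move=> /eigenvalueP[v v_eig v0]; have [a1|] := lerP 1 a; last by lra.
  by apply: le_half_add_sqrt; [lra | exact: eigen_quad_le v_eig v0].
split; first by apply: spec_rad_le eigen_le _; lra.
split=> [rad_eq | iso].
- have /eigenvalueP[v v_eig v0] : eigenvalue (adjmx R e) B.
    by rewrite -rad_eq; apply: (spec_rad_eigenvalue eigen_le); rewrite rad_eq; lra.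
  have [T T0 [T_cl T_eq]] := eigen_quad_eq esym nbr_bound B_ge1 v_eig v0 n3 B_quad.
  have [H H2 eH] := nbr_deg_sum_eq_hub esym eirr no_dcc n3 T0 T_cl T_eq.
  exact: eq_graph_iso eH (hub_graph_iso H2).
- have [H H2 eH] := iso_K11n_hub (ltnW n3) iso.
  apply: spec_rad_max eigen_le _; rewrite (eq_adjmx R eH).
  by apply: hub_graph_eigenvalue => //; lra.
Qed.
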